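(* Let $d\sigma^2$ be a smooth positive semi-definite metric on a $2$-manifold $M^2$, let $p$ be a singular point of $d\sigma^2$ at which the null space $\mathcal{N}_p$ is one-dimensional, and let $(u,v)$ be a local coordinate system centered at $p$, with $d\sigma^2=E\,du^2+2F\,du\,dv+G\,dv^2$. If $p$ is admissible and $(u,v)$ is adjusted at $p$, then $F=G=0$, $E_v=2F_u$, $G_u=G_v=0$ hold at $p=(0,0)$. Conversely, if there exists a local coordinate system $(u,v)$ centered at $p$ satisfying these identities at $(0,0)$, then $p$ is an admissible singular point and $(u,v)$ is adjusted at $p$.
   Context: Write $\langle X,Y\rangle=d\sigma^2(X,Y)$. A point is singular if $d\sigma^2$ is not positive definite there. The null space at $p$ is $\mathcal{N}_p=\{v\in T_pM^2: d\sigma^2(v,w)=0\ \forall w\in T_pM^2\}$. The Kossowski pseudo-connection is $\Gamma(X,Y,Z)=\tfrac12\bigl(X\langle Y,Z\rangle+Y\langle X,Z\rangle-Z\langle X,Y\rangle+\langle[X,Y],Z\rangle-\langle[X,Z],Y\rangle-\langle[Y,Z],X\rangle\bigr)$. A singular point $p$ is admissible if $\Gamma(V_1,V_2,V_3)(p)=0$ for all smooth vector fields $V_1,V_2,V_3$ with $V_3(p)\in\mathcal{N}_p$. A local coordinate system $(u,v)$ is adjusted at a singular point $p$ if $\partial/\partial v\in\mathcal{N}_p$. *)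

(* Everything is expressed in a local chart (u,v)
   centered at p, i.e. p = (0,0). *)
From Stdlib Require Import Reals.
From Coquelicot Require Import Coquelicot.
Open Scope R_scope.

Definition fn := R -> R -> R.

Definition pu (f : fn) : fn := fun u v => Derive (fun t => f t v) u.
Definition pv (f : fn) : fn := fun u v => Derive (fun t => f u t) v.

Fixpoint Ck (k : nat) (U : R * R -> Prop) (f : fn) : Prop :=
  match k with
  | O => forall z, U z -> continuous (fun w : R * R => f (fst w) (snd w)) z
  | S k' =>
      (forall z, U z -> ex_derive (fun t => f t (snd z)) (fst z)
                      /\ ex_derive (fun t => f (fst z) t) (snd z))
      /\ Ck k' U f /\ Ck k' U (pu f) /\ Ck k' U (pv f)
  end.

Definition smooth_on (U : R * R -> Prop) (f : fn) : Prop := forall k, Ck k U f.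

(* A vector field a d/du + b d/dv, given by its component functions. *)
Definition vfield := (fn * fn)%type.

Definition smooth_vf (U : R * R -> Prop) (X : vfield) : Prop :=
  smooth_on U (fst X) /\ smooth_on U (snd X).

Definition ds2 (E F G : fn) (u v a1 b1 a2 b2 : R) : R :=
  E u v * a1 * a2 + F u v * (a1 * b2 + b1 * a2) + G u v * b1 * b2.

Definition inner (E F G : fn) (X Y : vfield) : fn :=
  fun u v => ds2 E F G u v (fst X u v) (snd X u v) (fst Y u v) (snd Y u v).

Definition der (X : vfield) (f : fn) : fn :=
  fun u v => fst X u v * pu f u v + snd X u v * pv f u v.

Definition bracket (X Y : vfield) : vfield :=
  (fun u v => der X (fst Y) u v - der Y (fst X) u v,
   fun u v => der X (snd Y) u v - der Y (snd X) u v).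

Definition Gamma (E F G : fn) (X Y Z : vfield) : fn :=
  fun u v => / 2 * ( der X (inner E F G Y Z) u v + der Y (inner E F G X Z) u v
                     - der Z (inner E F G X Y) u v
                     + inner E F G (bracket X Y) Z u v
                     - inner E F G (bracket X Z) Y u v
                     - inner E F G (bracket Y Z) X u v).

Definition psd_on (U : R * R -> Prop) (E F G : fn) : Prop :=
  forall z, U z -> forall a b, 0 <= ds2 E F G (fst z) (snd z) a b a b.

Definition singular_at (E F G : fn) (u v : R) : Prop :=
  ~ (forall a b, (a, b) <> (0, 0) -> 0 < ds2 E F G u v a b a b).

Definition in_null (E F G : fn) (u v a b : R) : Prop :=
  forall c d, ds2 E F G u v a b c d = 0.

Definition null_one_dim (E F G : fn) (u v : R) : Prop :=
  exists a b, (a, b) <> (0, 0) /\ in_null E F G u v a b /\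
    (forall c d, in_null E F G u v c d -> exists t, c = t * a /\ d = t * b).

Definition admissible_at0 (U : R * R -> Prop) (E F G : fn) : Prop :=
  forall X Y Z : vfield, smooth_vf U X -> smooth_vf U Y -> smooth_vf U Z ->
    in_null E F G 0 0 (fst Z 0 0) (snd Z 0 0) ->
    Gamma E F G X Y Z 0 0 = 0.

(* the chart is adjusted at (0,0): d/dv = (0,1) lies in the null space *)
Definition adjusted_at0 (E F G : fn) : Prop := in_null E F G 0 0 0 1.

(* At a point where F = G = 0 and the field Z is null (first component 0),
   the first-order terms of the vector fields X, Y, Z cancel in the Kossowski
   pseudo-connection, which reduces to
     Gamma(X, Y, Z) = Z^v / 2 * ((2F_u - E_v) X^u Y^u + G_u (X^u Y^v + X^v Y^u) + G_v X^v Y^v).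
   Adjustedness is exactly F = G = 0 at p.  If p is admissible, testing the
   formula on constant fields kills its three coefficients; conversely, a
   one-dimensional null space forces E(p) <> 0, so null vectors are multiples
   of d/dv and the formula vanishes identically. *)
From Stdlib Require Import Reals Lra FunctionalExtensionality.
From Coquelicot Require Import Coquelicot.
Open Scope R_scope.

Definition has_partials (f : fn) (u v : R) : Prop :=
  ex_derive (fun t => f t v) u /\ ex_derive (fun t => f u t) v.

Definition vf_has_partials (X : vfield) (u v : R) : Prop :=
  has_partials (fst X) u v /\ has_partials (snd X) u v.

Definition const_vf (a b : R) : vfield := (fun _ _ => a, fun _ _ => b).

Lemma smooth_on_has_partials U f u v :
  U (u, v) -> smooth_on U f -> has_partials f u v.
Proof. intros Huv Hf. exact (proj1 (Hf 1%nat) (u, v) Huv). Qed.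

Lemma smooth_vf_has_partials U X u v :
  U (u, v) -> smooth_vf U X -> vf_has_partials X u v.
Proof.
  intros Huv [H1 H2]; split; eapply smooth_on_has_partials; eassumption.
Qed.

Lemma pu_const c : pu (fun _ _ => c) = fun _ _ => 0.
Proof.
  unfold pu; do 2 (apply functional_extensionality; intro). apply Derive_const.
Qed.

Lemma pv_const c : pv (fun _ _ => c) = fun _ _ => 0.
Proof.
  unfold pv; do 2 (apply functional_extensionality; intro). apply Derive_const.
Qed.

Lemma smooth_on_const U c : smooth_on U (fun _ _ => c).
Proof.
  intro k; revert c; induction k as [|k IHk]; intro c; simpl.
  - intros z _. apply continuous_const.
  - rewrite pu_const, pv_const.
    repeat split; auto; apply ex_derive_const.
Qed.

Lemma smooth_const_vf U a b : smooth_vf U (const_vf a b).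
Proof. split; [exact (smooth_on_const U a) | exact (smooth_on_const U b)]. Qed.

Section LeibnizRule.

Variables (E F G : fn) (Y Z : vfield) (u v : R).
Hypotheses (dE : has_partials E u v) (dF : has_partials F u v)
  (dG : has_partials G u v)
  (dY : vf_has_partials Y u v) (dZ : vf_has_partials Z u v).

Lemma pu_inner :
  pu (inner E F G Y Z) u v =
    ds2 (pu E) (pu F) (pu G) u v (fst Y u v) (snd Y u v) (fst Z u v) (snd Z u v)
  + ds2 E F G u v (pu (fst Y) u v) (pu (snd Y) u v) (fst Z u v) (snd Z u v)
  + ds2 E F G u v (fst Y u v) (snd Y u v) (pu (fst Z) u v) (pu (snd Z) u v).
Proof.
  destruct dE as [E1 _], dF as [F1 _], dG as [G1 _],
    dY as [[Y1 _] [Y2 _]], dZ as [[Z1 _] [Z2 _]].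
  unfold pu, inner, ds2; apply is_derive_unique.
  auto_derive; [repeat split; assumption | ring].
Qed.

Lemma pv_inner :
  pv (inner E F G Y Z) u v =
    ds2 (pv E) (pv F) (pv G) u v (fst Y u v) (snd Y u v) (fst Z u v) (snd Z u v)
  + ds2 E F G u v (pv (fst Y) u v) (pv (snd Y) u v) (fst Z u v) (snd Z u v)
  + ds2 E F G u v (fst Y u v) (snd Y u v) (pv (fst Z) u v) (pv (snd Z) u v).
Proof.
  destruct dE as [_ E1], dF as [_ F1], dG as [_ G1],
    dY as [[_ Y1] [_ Y2]], dZ as [[_ Z1] [_ Z2]].
  unfold pv, inner, ds2; apply is_derive_unique.
  auto_derive; [repeat split; assumption | ring].
Qed.

End LeibnizRule.

Lemma Gamma_null_field E F G X Y Z u v :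
  has_partials E u v -> has_partials F u v -> has_partials G u v ->
  vf_has_partials X u v -> vf_has_partials Y u v -> vf_has_partials Z u v ->
  F u v = 0 -> G u v = 0 -> fst Z u v = 0 ->
  Gamma E F G X Y Z u v =
    snd Z u v / 2 *
    ds2 (fun s t => 2 * pu F s t - pv E s t) (pu G) (pv G) u v
      (fst X u v) (snd X u v) (fst Y u v) (snd Y u v).
Proof.
  intros dE dF dG dX dY dZ HF HG HZ.
  unfold Gamma, der.
  rewrite !pu_inner, !pv_inner by assumption.
  unfold inner, bracket, der, ds2; simpl.
  rewrite HF, HG, HZ; field.
Qed.

Lemma in_null_v_iff E F G u v :
  in_null E F G u v 0 1 <-> F u v = 0 /\ G u v = 0.
Proof.
  unfold in_null, ds2; split.
  - intro H; pose proof (H 1 0); pose proof (H 0 1); split; lra.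
  - intros [HF HG] c d; rewrite HF, HG; ring.
Qed.

Lemma ds2_coefs_eq0 E F G u v :
  (forall a b c d, ds2 E F G u v a b c d = 0) ->
  E u v = 0 /\ F u v = 0 /\ G u v = 0.
Proof.
  unfold ds2; intro H.
  pose proof (H 1 0 1 0); pose proof (H 1 0 0 1); pose proof (H 0 1 0 1).
  repeat split; lra.
Qed.

Lemma null_one_dim_E_neq0 E F G u v :
  F u v = 0 -> G u v = 0 -> null_one_dim E F G u v -> E u v <> 0.
Proof.
  intros HF HG (a & b & Hab & _ & Hspan) HE.
  assert (Hall : forall c d, in_null E F G u v c d).
  { intros c d x y; unfold ds2; rewrite HE, HF, HG; ring. }
  destruct (Hspan 1 0 (Hall 1 0)) as (t & Ht1 & Ht0).
  destruct (Hspan 0 1 (Hall 0 1)) as (s & Hs0 & Hs1).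
  (* (1,0) = t (a,b) forces t <> 0, hence b = 0, contradicting (0,1) = s (a,b). *)
  exfalso; nra.
Qed.

Lemma in_null_fst_eq0 E F G u v a b :
  E u v <> 0 -> F u v = 0 -> G u v = 0 -> in_null E F G u v a b -> a = 0.
Proof.
  intros HE HF HG Hnull.
  specialize (Hnull 1 0); unfold ds2 in Hnull; rewrite HF, HG in Hnull.
  apply (Rmult_eq_reg_l (E u v)); [lra | exact HE].
Qed.

Theorem proposition2p7 (U : R * R -> Prop) (E F G : R -> R -> R) :
  open U -> U (0, 0) ->
  smooth_on U E -> smooth_on U F -> smooth_on U G ->
  psd_on U E F G ->
  singular_at E F G 0 0 ->
  null_one_dim E F G 0 0 ->
  (admissible_at0 U E F G /\ adjusted_at0 E F G) <->
  (F 0 0 = 0 /\ G 0 0 = 0 /\ pv E 0 0 = 2 * pu F 0 0 /\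
   pu G 0 0 = 0 /\ pv G 0 0 = 0).
Proof.
  intros _ H0 HE HF HG _ _ Hnull.
  pose proof (smooth_on_has_partials _ _ _ _ H0 HE) as dE.
  pose proof (smooth_on_has_partials _ _ _ _ H0 HF) as dF.
  pose proof (smooth_on_has_partials _ _ _ _ H0 HG) as dG.
  split.
  - intros [Hadm Hadj].
    apply in_null_v_iff in Hadj as [HF0 HG0].
    assert (Hform : forall a b c d,
      ds2 (fun s t => 2 * pu F s t - pv E s t) (pu G) (pv G) 0 0 a b c d = 0).
    { intros a b c d.
      assert (Hgam := Hadm (const_vf a b) (const_vf c d) (const_vf 0 1)
        (smooth_const_vf U a b) (smooth_const_vf U c d) (smooth_const_vf U 0 1)
        (proj2 (in_null_v_iff E F G 0 0) (conj HF0 HG0))).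
      rewrite Gamma_null_field in Hgam
        by (reflexivity || eauto using smooth_vf_has_partials, smooth_const_vf).
      simpl in Hgam; lra. }
    destruct (ds2_coefs_eq0 _ _ _ _ _ Hform) as (HEv & HGu & HGv).
    repeat split; auto; lra.
  - intros (HF0 & HG0 & HEv & HGu & HGv).
    pose proof (null_one_dim_E_neq0 _ _ _ _ _ HF0 HG0 Hnull) as HE0.
    split; [| exact (proj2 (in_null_v_iff E F G 0 0) (conj HF0 HG0))].
    intros X Y Z HX HY HZ HZnull.
    assert (HZ0 : fst Z 0 0 = 0) by exact (in_null_fst_eq0 _ _ _ _ _ _ _ HE0 HF0 HG0 HZnull).
    rewrite Gamma_null_field by eauto using smooth_vf_has_partials.
    unfold ds2; rewrite HEv, HGu, HGv; ring.
Qed.
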